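(* Fix the rates $P_i>0$, $i\in\mathcal S$, let $\hat P=\sum_{i\in\mathcal S}P_i$, and let $(E_i(0),\,i\in\mathcal S)$ be any initial energy configuration with total energy $E=\sum_iE_i(0)$. Let $(\tilde E_i(0),\,i\in\mathcal S)$ be the balanced configuration with the same total energy, $\tilde E_i(0)=E\,P_i/\hat P$ (assumed to satisfy $\tilde E_i(0)\le\overline E_i$). If a nonnegative demand function $(d(t),\,t\ge0)$ can be completely served on $[0,T]$ by some discharge-only policy starting from $(E_i(0))$, then it can be completely served on $[0,T]$ by some discharge-only policy starting from $(\tilde E_i(0))$.
   Context: A finite set $\mathcal S$ of energy stores is given. Store $i\in\mathcal S$ has capacity $\overline E_i>0$ and maximum discharge rate $P_i>0$. A (discharge-only) policy is a choice of measurable rate functions $(r_i(t),\,t\ge0)$, $i\in\mathcal S$, with stored energies $E_i(t)=E_i(0)-\int_0^t r_i(u)\,du$, subject to $0\le E_i(t)\le\overline E_i$, $0\le r_i(t)\le P_i$ and $\sum_{i\in\mathcal S}r_i(t)\le d(t)$ for all $t\ge0$, where $(d(t),\,t\ge0)$ is a nonnegative demand function. The demand is completely served on $[0,T]$ if $\sum_i r_i(t)=d(t)$ for almost every $t\in[0,T]$. A configuration is called balanced if $E_i/P_i$ is the same for all $i\in\mathcal S$. *)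

From HB Require Import structures.
From mathcomp Require Import all_boot all_order all_algebra.
From mathcomp Require Import all_classical all_reals all_analysis.
Set Implicit Arguments. Unset Strict Implicit. Unset Printing Implicit Defensive.
Import Order.TTheory GRing.Theory Num.Theory.
Local Open Scope classical_set_scope.
Local Open Scope ring_scope.

Section Storage.
Variables (R : realType) (S : finType).

Definition stored_energy (E0 : S -> R) (r : S -> R -> R) (i : S) (t : R) : R :=
  E0 i - Rintegral (@lebesgue_measure R) (`[0, t]%classic : set R) (r i).

Definition discharge_policy (Ebar P : S -> R) (d : R -> R) (E0 : S -> R)
    (r : S -> R -> R) : Prop :=
  (forall i, measurable_fun (`[0, +oo[%classic : set R) (r i)) /\
  (forall t, 0 <= t ->
     (forall i, 0 <= stored_energy E0 r i t <= Ebar i) /\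
     (forall i, 0 <= r i t <= P i) /\
     \sum_(i : S) r i t <= d t).

Definition completely_served (r : S -> R -> R) (d : R -> R) (T : R) : Prop :=
  {ae (@lebesgue_measure R), forall t : R, (`[0, T]%classic : set R) t -> \sum_(i : S) r i t = d t}.

Definition servable (Ebar P : S -> R) (d : R -> R) (E0 : S -> R) (T : R) : Prop :=
  exists r : S -> R -> R, discharge_policy Ebar P d E0 r /\ completely_served r d T.

End Storage.

(* Given a feasible discharge policy r serving d from E0, the "proportional"
   policy r~_i(t) = s_i * sum_j r_j(t), with shares s_i = P_i / P^, serves
   the same total rate sum_j r_j(t), hence the same demand.  It respects the
   rate limits because sum_j r_j(t) <= P^, and starting from the balanced
   configuration E~_i(0) = s_i * E its stored energy is
       E~_i(t) = s_i * (E - int_0^t sum_j r_j) = s_i * sum_j E_j(t),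
   which lies between 0 (each E_j(t) >= 0) and E~_i(0) <= Ebar_i. *)

From HB Require Import structures.
From mathcomp Require Import all_boot all_order all_algebra.
From mathcomp Require Import all_classical all_reals all_analysis.
From mathcomp Require Import measurable_realfun.
Set Implicit Arguments. Unset Strict Implicit. Unset Printing Implicit Defensive.
Import Order.TTheory GRing.Theory Num.Theory.
Local Open Scope classical_set_scope.
Local Open Scope ring_scope.

Section Shares.
Variables (R : realType) (S : finType) (P : S -> R).
Hypothesis P_pos : forall i, 0 < P i.

Definition share (i : S) : R := P i / \sum_(j : S) P j.

(* Each store's rate is at most the total rate, which is thus positive. *)
Lemma total_rate_gt0 (i : S) : 0 < \sum_(j : S) P j.
Proof.
apply: (lt_le_trans (P_pos i)).
by rewrite (bigD1 i) //= lerDl; apply: sumr_ge0 => j _; exact: ltW.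
Qed.

Lemma share_ge0 (i : S) : 0 <= share i.
Proof. by rewrite divr_ge0 // ltW // total_rate_gt0. Qed.

(* Shares sum to one, so redistributing a total x by shares preserves it
   (when S is empty both sides are empty sums). *)
Lemma share_redistribute (x : S -> R) :
  \sum_(i : S) share i * \sum_(j : S) x j = \sum_(j : S) x j.
Proof.
have [i0 _ | S0] := pickP (@predT S); last by rewrite !big_pred0.
rewrite -mulr_suml /share -mulr_suml divff ?mul1r //.
by rewrite gt_eqF // total_rate_gt0.
Qed.

Lemma share_le_rate (i : S) (X : R) :
  0 <= X -> X <= \sum_(j : S) P j -> share i * X <= P i.
Proof.
move=> X0 XP; have Phat0 := total_rate_gt0 i.
by rewrite /share mulrAC ler_pdivrMr // ler_wpM2l // ltW.
Qed.

End Shares.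

Section Integrals.
Variable (R : realType).
Local Notation mu := (@lebesgue_measure R).
Local Notation upto t := (`[0%R, t]%classic : set R).
Local Notation halfline := (`[0%R, +oo[%classic : set R).

Lemma finite_measure_itv0 (t : R) : (mu (upto t) < +oo)%E.
Proof.
rewrite lebesgue_measure_itv /=; case: ifP => _; last exact: ltey.
by rewrite -EFinD ltry.
Qed.

(* Policies are measurable on [0,+oo[, hence on every window [0,t]. *)
Lemma itv0_sub_halfline (t : R) : upto t `<=` halfline.
Proof. by move=> x /=; rewrite !in_itv /= => /andP[-> _]. Qed.

Lemma bounded_integrable_itv0 (f : R -> R) (t M : R) :
  measurable_fun (upto t) f -> (forall x, (upto t) x -> `|f x| <= M) ->
  mu.-integrable (upto t) (EFin \o f).
Proof.
move=> mf bd; apply: measurable_bounded_integrable => //.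
  exact: finite_measure_itv0.
rewrite /bounded_near; near=> K => x Ax /=.
apply: le_trans (bd x Ax) _; near: K.
by apply: nbhs_pinfty_ge; exact: num_real.
Unshelve. all: by end_near.
Qed.

End Integrals.

Section BoundedRates.
Variables (R : realType) (S : finType) (P : S -> R) (r : S -> R -> R).
Local Notation mu := (@lebesgue_measure R).
Local Notation upto t := (`[0%R, t]%classic : set R).
Local Notation halfline := (`[0%R, +oo[%classic : set R).
Hypothesis r_meas : forall j, measurable_fun halfline (r j).
Hypothesis r_bound : forall j x, 0 <= x -> 0 <= r j x <= P j.

Lemma rate_sum_integrable (t : R) (s : seq S) :
  mu.-integrable (upto t) (EFin \o (fun x => \sum_(j <- s) r j x)).
Proof.
apply: (@bounded_integrable_itv0 _ _ _ (\sum_(j <- s) P j)).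
  apply: measurable_sum => j; apply: measurable_funS (r_meas j) => //.
  exact: itv0_sub_halfline.
move=> x; rewrite /= in_itv /= => /andP[x0 _].
rewrite ger0_norm; last by apply: sumr_ge0 => j _; case/andP: (r_bound j x0).
by apply: ler_sum => j _; case/andP: (r_bound j x0).
Qed.

Lemma Rintegral_rate_sum (t : R) (s : seq S) :
  Rintegral mu (upto t) (fun x => \sum_(j <- s) r j x) =
  \sum_(j <- s) Rintegral mu (upto t) (r j).
Proof.
elim: s => [|j s IH].
  rewrite big_nil; under eq_Rintegral do rewrite big_nil.
  by rewrite Rintegral_cst // mul0r.
rewrite big_cons -IH; under eq_Rintegral do rewrite big_cons.
rewrite RintegralD //; last exact: rate_sum_integrable.
have := rate_sum_integrable t [:: j].
by apply: eq_integrable => // x _ /=; rewrite big_seq1.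
Qed.

Lemma Rintegral_rate_sum_ge0 (t : R) :
  0 <= Rintegral mu (upto t) (fun x => \sum_(j : S) r j x).
Proof.
apply: Rintegral_ge0 => x; rewrite /= in_itv /= => /andP[x0 _].
by apply: sumr_ge0 => j _; case/andP: (r_bound j x0).
Qed.

Lemma total_stored_energy (E0 : S -> R) (t : R) :
  \sum_(j : S) stored_energy E0 r j t =
  \sum_(j : S) E0 j - Rintegral mu (upto t) (fun x => \sum_(j : S) r j x).
Proof. by rewrite Rintegral_rate_sum sumrB. Qed.

End BoundedRates.

Section ProportionalPolicy.
Variables (R : realType) (S : finType) (Ebar P : S -> R) (d : R -> R).
Variables (E0 : S -> R) (r : S -> R -> R).
Local Notation mu := (@lebesgue_measure R).
Local Notation halfline := (`[0%R, +oo[%classic : set R).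
Hypothesis P_pos : forall i, 0 < P i.

Definition proportional_policy (i : S) (t : R) : R :=
  share P i * \sum_(j : S) r j t.

Definition balanced (i : S) : R := share P i * \sum_(j : S) E0 j.

Lemma proportional_total_rate (t : R) :
  \sum_(i : S) proportional_policy i t = \sum_(j : S) r j t.
Proof. exact: share_redistribute. Qed.

Lemma proportional_serves (T : R) :
  completely_served r d T -> completely_served proportional_policy d T.
Proof.
apply: filterS; first exact: (ae_filter_ringOfSetsType mu).
move=> t served_t Tt.
by rewrite proportional_total_rate; exact: served_t.
Qed.

Hypothesis r_policy : discharge_policy Ebar P d E0 r.

Let r_meas : forall j, measurable_fun halfline (r j).
Proof. by case: r_policy. Qed.

Let r_bound : forall j x, 0 <= x -> 0 <= r j x <= P j.
Proof. by move=> j x x0; case: r_policy => _ /(_ x x0) [_ []]. Qed.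

Lemma proportional_stored_energy (i : S) (t : R) :
  stored_energy balanced proportional_policy i t =
  share P i * \sum_(j : S) stored_energy E0 r j t.
Proof.
rewrite /stored_energy /proportional_policy RintegralZl //; last first.
  exact: (rate_sum_integrable r_meas r_bound).
by rewrite -/(stored_energy E0 r) (total_stored_energy r_meas r_bound) mulrBr.
Qed.

(* From a balanced start within capacity the proportional policy is feasible:
   its stored energy lies between 0 and the initial energy, and its rates
   between 0 and P_i since the original total rate is at most P^. *)
Lemma proportional_feasible :
  (forall i, balanced i <= Ebar i) ->
  discharge_policy Ebar P d balanced proportional_policy.
Proof.
move=> balanced_le; case: r_policy => _ r_at; split.
  by move=> i; apply: measurable_funM => //; exact: measurable_sum.
move=> t t0; have [r_stored [_ r_demand]] := r_at t t0.
have total_ge0 : 0 <= \sum_(j : S) r j t.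
  by apply: sumr_ge0 => j _; case/andP: (r_bound j t0).
split; last split; last by rewrite proportional_total_rate; exact: r_demand.
- move=> i; rewrite proportional_stored_energy; apply/andP; split.
    by rewrite mulr_ge0 ?share_ge0 // sumr_ge0 // => j _; case/andP: (r_stored j).
  apply: le_trans (balanced_le i); apply: ler_wpM2l; first exact: share_ge0.
  rewrite (total_stored_energy r_meas r_bound) lerBlDr lerDl.
  exact: (Rintegral_rate_sum_ge0 r_bound).
- move=> i; rewrite /proportional_policy mulr_ge0 ?share_ge0 //=.
  apply: share_le_rate => //; apply: ler_sum => j _.
  by case/andP: (r_bound j t0).
Qed.

End ProportionalPolicy.

Theorem mainTheorem3 (R : realType) (S : finType) (Ebar P : S -> R)
    (d : R -> R) (E0 : S -> R) (T : R) :
  (forall i, 0 < Ebar i) -> (forall i, 0 < P i) ->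
  (forall t, 0 <= t -> 0 <= d t) ->
  let Phat := \sum_(i : S) P i in
  let E := \sum_(i : S) E0 i in
  let Etilde := fun i => E * P i / Phat in
  (forall i, Etilde i <= Ebar i) ->
  servable Ebar P d E0 T ->
  servable Ebar P d Etilde T.
Proof.
move=> _ P_pos _ Phat E Etilde Etilde_le [r [r_policy r_serves]].
have Etilde_balanced : Etilde = balanced P E0.
  by apply: funext => i; rewrite /balanced /share [RHS]mulrAC (mulrC (P i)).
rewrite Etilde_balanced; exists (proportional_policy P r); split.
  by apply: proportional_feasible => // i; rewrite -Etilde_balanced.
exact: proportional_serves.
Qed.
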